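(* Define $g:\{0,1\}^*\to\mathbb{T}$ by $g(\epsilon)=\bullet$, $g(0)=\mathcal{L}$, $g(1)=\mathcal{R}$ and $g(b_1\cdots b_n)=g(b_1)\bowtie\cdots\bowtie g(b_n)$ for $b_i\in\{0,1\}$ (so that $g(s\cdot 0)=g(s)\bowtie\mathcal{L}$ and $g(s\cdot 1)=g(s)\bowtie\mathcal{R}$). Then $g$ is a bijection from $\{0,1\}^*$ onto the set $\mathbb{U}$ of unary trees, and for all $x,y\in\{0,1\}^*$: $x\preceq y$ (i.e. there is $z$ with $x\cdot z=y$) iff $g(y)\sqsubseteq g(x)$.
   Context: A tree share is a finite binary tree whose leaves are labelled $\bullet$ (black) or $\circ$ (white), in canonical form: no subtree has the form $\mathrm{Node}(\bullet,\bullet)$ or $\mathrm{Node}(\circ,\circ)$ (such subtrees are identified with the leaf $\bullet$, resp. $\circ$). $\mathbb{T}$ denotes the set of tree shares. $\tau_1\sqcup\tau_2$ is computed by unfolding both trees (replacing a leaf $\ell$ by $\mathrm{Node}(\ell,\ell)$ as needed) to a common shape, taking Boolean join leafwise ($\bullet$ = true, $\circ$ = false), and refolding to canonical form. $\tau_1\sqsubseteq\tau_2$ means $\tau_1\sqcup\tau_2=\tau_2$. The product $\tau_1\bowtie\tau_2$ is obtained by replacing every $\bullet$ leaf of $\tau_1$ by a copy of $\tau_2$ and refolding to canonical form. $\mathcal{L}=\mathrm{Node}(\bullet,\circ)$ and $\mathcal{R}=\mathrm{Node}(\circ,\bullet)$. A unary tree is a tree share with exactly one black leaf; $\mathbb{U}$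 is the set of unary trees. *)

From Stdlib Require Import List Bool.
Import ListNotations.

(* Raw binary trees with leaves coloured: true = black (•), false = white (∘). *)
Inductive tree : Type :=
| Leaf : bool -> tree
| Node : tree -> tree -> tree.

Fixpoint canonical (t : tree) : bool :=
  match t with
  | Leaf _ => true
  | Node (Leaf b1) (Leaf b2) => negb (Bool.eqb b1 b2)
  | Node l r => canonical l && canonical r
  end.

Definition mkNode (l r : tree) : tree :=
  match l, r with
  | Leaf b1, Leaf b2 => if Bool.eqb b1 b2 then Leaf b1 else Node l r
  | _, _ => Node l r
  end.

(* Join ⊔: unfold to a common shape, leafwise boolean "or", refold. *)
Fixpoint tjoin (t1 t2 : tree) : tree :=
  match t1, t2 with
  | Leaf true, _ => Leaf true
  | Leaf false, _ => t2
  | _, Leaf true => Leaf true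
  | _, Leaf false => t1
  | Node a b, Node c d => mkNode (tjoin a c) (tjoin b d)
  end.

Definition tle (t1 t2 : tree) : Prop := tjoin t1 t2 = t2.

Fixpoint tbowtie (t1 t2 : tree) : tree :=
  match t1 with
  | Leaf true => t2
  | Leaf false => Leaf false
  | Node l r => mkNode (tbowtie l t2) (tbowtie r t2)
  end.

Definition tL : tree := Node (Leaf true) (Leaf false).
Definition tR : tree := Node (Leaf false) (Leaf true).

Fixpoint nblack (t : tree) : nat :=
  match t with
  | Leaf b => if b then 1 else 0
  | Node l r => nblack l + nblack r
  end.

Definition unary (t : tree) : Prop := canonical t = true /\ nblack t = 1.

(* g : {0,1}^* -> T ; bit false = 0 ↦ L, bit true = 1 ↦ R,
   g(b1...bn) = g(b1) ⋈ (... ⋈ (g(bn) ⋈ •)). *)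
Definition gbit (b : bool) : tree := if b then tR else tL.

Fixpoint g (s : list bool) : tree :=
  match s with
  | [] => Leaf true
  | b :: s' => tbowtie (gbit b) (g s')
  end.

From Stdlib Require Import List Bool Lia.
Import ListNotations.

(* The idea: the product with L or R only pads its right operand with a
   white sibling, so that  g (0 :: s) = Node (g s) ∘  and
   g (1 :: s) = Node ∘ (g s)  (lemma [g_cons]); here g s is never the white
   leaf.  Hence g s is just the path  s  from the root to the unique black
   leaf, drawn as a tree with white siblings everywhere else.
   All four claims then follow by induction on bit strings:
   - g s is canonical with one black leaf, because padding a non-white tree
     with a white sibling preserves canonicity and the black count;
   - g is injective, reading off the first bit from the shape of the root;
   - every unary tree is some g s, because at a unary Node exactly one child
     has black leaves and the other, being canonical, is the white leaf;
   - on trees of the form Node t ∘ the order ⊑ is computed childwise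
     ([tle_Node]), so  g y ⊑ g x  peels off common first bits of x and y and
     ends with x = [] (g [] = • is the top) exactly when x is a prefix of y. *)

Lemma mkNode_unfolded_l : forall t b, t <> Leaf b -> mkNode (Leaf b) t = Node (Leaf b) t.
Proof.
  intros [c|l r] b Hne; simpl; [|reflexivity].
  destruct (Bool.eqb b c) eqn:E; [|reflexivity].
  apply Bool.eqb_prop in E; subst; congruence.
Qed.

Lemma mkNode_unfolded_r : forall t b, t <> Leaf b -> mkNode t (Leaf b) = Node t (Leaf b).
Proof.
  intros [c|l r] b Hne; simpl; [|reflexivity].
  destruct (Bool.eqb c b) eqn:E; [|reflexivity].
  apply Bool.eqb_prop in E; subst; congruence.
Qed.

Lemma g_not_white : forall s, g s <> Leaf false.
Proof.
  induction s as [|[|] s IH]; cbn [g gbit tbowtie tL tR]; [congruence| |].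
  - rewrite mkNode_unfolded_l by exact IH; congruence.
  - rewrite mkNode_unfolded_r by exact IH; congruence.
Qed.

Lemma g_cons : forall b s,
  g (b :: s) = if b then Node (Leaf false) (g s) else Node (g s) (Leaf false).
Proof.
  intros [|] s; cbn [g gbit tbowtie tL tR].
  - apply mkNode_unfolded_l, g_not_white.
  - apply mkNode_unfolded_r, g_not_white.
Qed.

Lemma canonical_pad_l : forall t b,
  t <> Leaf b -> canonical (Node (Leaf b) t) = canonical t.
Proof.
  intros [c|l r] b Hne; simpl; [|reflexivity].
  destruct b, c; simpl; congruence.
Qed.

Lemma canonical_pad_r : forall t b,
  t <> Leaf b -> canonical (Node t (Leaf b)) = canonical t.
Proof.
  intros [c|l r] b Hne; simpl; [|now rewrite andb_true_r].
  destruct b, c; simpl; congruence.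
Qed.

Lemma g_unary : forall s, unary (g s).
Proof.
  induction s as [|b s [Hcan Hblack]]; [split; reflexivity|].
  pose proof (g_not_white s) as Hne.
  rewrite g_cons; destruct b; split.
  - rewrite canonical_pad_l by exact Hne; exact Hcan.
  - simpl; exact Hblack.
  - rewrite canonical_pad_r by exact Hne; exact Hcan.
  - simpl; lia.
Qed.

Lemma g_injective : forall s1 s2, g s1 = g s2 -> s1 = s2.
Proof.
  induction s1 as [|b1 s1 IH]; intros [|b2 s2] Heq; [reflexivity| | |].
  - rewrite g_cons in Heq; destruct b2; discriminate.
  - rewrite g_cons in Heq; destruct b1; discriminate.
  - rewrite !g_cons in Heq.
    destruct b1, b2; injection Heq; intros;
      solve [ f_equal; apply IH; assumption
            | exfalso; eapply g_not_white; eauto ].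
Qed.

Lemma canonical_Node : forall l r,
  canonical (Node l r) = true -> canonical l = true /\ canonical r = true.
Proof.
  intros [x|l1 l2] [y|r1 r2] H; simpl in *; auto; apply andb_prop in H; tauto.
Qed.

Lemma canonical_no_black : forall t,
  canonical t = true -> nblack t = 0 -> t = Leaf false.
Proof.
  induction t as [[|]|l IHl r IHr]; simpl; intros Hcan Hblack; try lia; auto.
  destruct (canonical_Node _ _ Hcan) as [Hl Hr].
  rewrite IHl in Hcan by (auto; lia); rewrite IHr in Hcan by (auto; lia).
  discriminate.
Qed.

Lemma g_surjective : forall t, unary t -> exists s, g s = t.
Proof.
  induction t as [b|l IHl r IHr]; intros [Hcan Hblack].
  - exists []; destruct b; simpl in *; [reflexivity|discriminate].
  - simpl in Hblack; destruct (canonical_Node _ _ Hcan) as [Hl Hr].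
    destruct (nblack l) as [|n] eqn:El.
    + assert (Hwhite : l = Leaf false) by (apply canonical_no_black; auto).
      destruct (IHr (conj Hr Hblack)) as [s Hs].
      exists (true :: s); rewrite g_cons, Hs, Hwhite; reflexivity.
    + assert (Hwhite : r = Leaf false)
        by (apply canonical_no_black; auto; lia).
      assert (Hl1 : nblack l = 1) by lia.
      destruct (IHl (conj Hl Hl1)) as [s Hs].
      exists (false :: s); rewrite g_cons, Hs, Hwhite; reflexivity.
Qed.

Lemma mkNode_Node : forall a b c d, mkNode a b = Node c d -> a = c /\ b = d.
Proof.
  intros [x|a1 a2] [y|b1 b2] c d H; simpl in H;
    try (injection H; auto; fail).
  destruct (Bool.eqb x y); [discriminate | injection H; auto].
Qed.

Lemma tle_Node : forall a b c d, mkNode c d = Node c d ->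
  tle (Node a b) (Node c d) <-> tle a c /\ tle b d.
Proof.
  unfold tle; simpl; intros a b c d Hunf; split.
  - apply mkNode_Node.
  - intros [-> ->]; exact Hunf.
Qed.

Lemma tle_white_iff : forall t, tle t (Leaf false) <-> t = Leaf false.
Proof.
  unfold tle; intros [[|]|l r]; simpl; split; congruence.
Qed.

Lemma g_prefix_iff_tle : forall x y,
  (exists z, x ++ z = y) <-> tle (g y) (g x).
Proof.
  induction x as [|b x IH]; intros y.
  - split; intros _; [|now exists y].
    unfold tle; simpl; destruct (g y) as [[|]|]; reflexivity.
  - destruct y as [|b' y].
    + split; [intros [z Hz]; discriminate|].
      unfold tle; rewrite g_cons; destruct b; discriminate.
    + pose proof (g_not_white x) as Hx; pose proof (g_not_white y) as Hy.
      rewrite !g_cons.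
      destruct b, b'; rewrite tle_Node by
        (first [apply mkNode_unfolded_l | apply mkNode_unfolded_r]; assumption);
        rewrite ?tle_white_iff.
      * rewrite <- IH; split.
        -- intros [z Hz]; injection Hz; intros; split; [reflexivity | now exists z].
        -- intros [_ [z Hz]]; exists z; simpl; congruence.
      * split; [intros [z Hz]; discriminate | intros [? _]; contradiction].
      * split; [intros [z Hz]; discriminate | intros [_ ?]; contradiction].
      * rewrite <- IH; split.
        -- intros [z Hz]; injection Hz; intros; split; [now exists z | reflexivity].
        -- intros [[z Hz] _]; exists z; simpl; congruence.
Qed.

Theorem lemma3 :
  (forall s : list bool, unary (g s)) /\
  (forall s1 s2 : list bool, g s1 = g s2 -> s1 = s2) /\
  (forall t : tree, unary t -> exists s : list bool, g s = t) /\
  (forall x y : list bool, (exists z : list bool, x ++ z = y) <-> tle (g y) (g x)).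
Proof.
  split; [exact g_unary|].
  split; [exact g_injective|].
  split; [exact g_surjective|].
  exact g_prefix_iff_tle.
Qed.
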